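(* Let $\mu\in(0,1)$ and let $\beta:[0,\infty)\to(0,\infty)$ be positive, bounded, non-increasing with $\lim_{a\to\infty}a\beta(a)=\mu$. Let $B(a)=\int_0^a\beta(s)\,ds$ and $W(\tau,b)=C(\tau)e^{-B(e^{\tau}b)}(1-b)^{\mu-1}$ for $\tau\ge0$, $b\in[0,1)$, with $C(\tau)>0$ such that $\int_0^1W(\tau,b)\,db=1$. Define $\delta(\tau)=\frac{C'(\tau)}{C(\tau)^2}-\frac{\mu}{C(\tau)}$. Then $W$ satisfies $$\partial_\tau W(\tau,b)+\partial_b((1-b)W(\tau,b))+e^{\tau}\beta(e^{\tau}b)W(\tau,b)=W(\tau,b)C(\tau)\delta(\tau),$$ $$W(\tau,0)(1+\delta(\tau))=\int_0^1e^{\tau}\beta(e^{\tau}b)W(\tau,b)\,db.$$ *)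

From Stdlib Require Import Reals.
From Coquelicot Require Import Coquelicot.
Open Scope R_scope.

(* B(a) = \int_0^a beta(s) ds  (Riemann integral; beta is monotone, hence
   Riemann integrable on every [0,a]). *)
Definition Bfun (beta : R -> R) (a : R) : R := RInt beta 0 a.

Definition Wfun (beta : R -> R) (mu : R) (C : R -> R) (tau b : R) : R :=
  C tau * exp (- Bfun beta (exp tau * b)) * Rpower (1 - b) (mu - 1).

(* Derivative of f at x, with increments restricted to the set D
   (used with D = [0,oo) so that at tau = 0 it is the right derivative). *)
Definition deriv_within (D : R -> Prop) (f : R -> R) (x l : R) : Prop :=
  filterlim (fun t => (f t - f x) / (t - x))
    (within (fun t => D t /\ t <> x) (locally x)) (locally l).

(* Write W(t,b) = C(t) p(t,b) with p(t,b) = S(e^t b) (1-b)^(mu-1), where S = exp(-B) and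
   f = beta S = -S'.  The normalisation says 1/C(t) = \int_0^1 p(t,b) db, and since
   d/dt p(t,b) = -e^t b f(e^t b) (1-b)^(mu-1), the derivative of 1/C is -e^t times the moment
   \int_0^1 f(e^t b) b (1-b)^(mu-1) db; this gives C'.  As beta is only monotone, S is merely
   Lipschitz, so every such derivative is obtained by integrating the two-sided mean-value
   bounds (y-x) f(y) <= S(x) - S(y) <= (y-x) f(x) and squeezing.  The same device shows that
   \int_0^y (e^t f(e^t b) (1-b)^mu + mu p(t,b)) db + S(e^t y) (1-y)^mu = 1 for y < 1; letting
   y -> 1 and splitting (1-b)^(mu-1) = (1-b)^mu + b (1-b)^(mu-1) gives the boundary condition.
   The transport equation is a pointwise computation at the continuity points of beta. *)

From Stdlib Require Import Reals Lra Lia.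
From Coquelicot Require Import Coquelicot.
Open Scope R_scope.

(** * Riemann integrability of monotone functions *)

Lemma ex_RInt_indicator_nondecreasing (G : R -> R) (c a b : R) :
  a <= b -> (forall x y, x <= y -> G x <= G y) ->
  ex_RInt (fun x => if Rle_dec c (G x) then 1 else 0) a b.
Proof.
  intros hab hG.
  assert (const_on : forall (v : R) u w, a <= u -> u <= w -> w <= b ->
      (forall x, u < x < w -> (if Rle_dec c (G x) then 1 else 0) = v) ->
      ex_RInt (fun x => if Rle_dec c (G x) then 1 else 0) u w).
  { intros v u w hu huw hw Hv. apply ex_RInt_ext with (fun _ => v).
    - intros x Hx. rewrite Rmin_left in Hx by lra. rewrite Rmax_right in Hx by lra.
      symmetry. apply Hv, Hx.
    - apply ex_RInt_const. }
  destruct (Rlt_dec (G b) c) as [Hb|Hb].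
  { apply (const_on 0); try lra. intros x Hx.
    destruct (Rle_dec c (G x)) as [h|h]; auto.
    assert (G x <= G b) by (apply hG; lra). lra. }
  destruct (Rle_dec c (G a)) as [Ha|Ha].
  { apply (const_on 1); try lra. intros x Hx.
    destruct (Rle_dec c (G x)) as [h|h]; auto.
    assert (G a <= G x) by (apply hG; lra). lra. }
  (* the indicator jumps once, at the supremum of [{x in [a,b] | G x < c}] *)
  set (E := fun x => a <= x <= b /\ G x < c).
  assert (bE : bound E) by (exists b; intros x [Hx _]; lra).
  assert (nE : exists x, E x) by (exists a; split; lra).
  destruct (completeness E bE nE) as [s [Hs1 Hs2]].
  assert (Has : a <= s) by (apply Hs1; split; lra).
  assert (Hsb : s <= b) by (apply Hs2; intros x [Hx _]; lra).
  apply ex_RInt_Chasles_0 with s; [lra| |].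
  - apply (const_on 0); try lra. intros x Hx.
    destruct (Rle_dec c (G x)) as [h|h]; auto.
    assert (Hub : is_upper_bound E x).
    { intros y [Hy1 Hy2]. destruct (Rle_dec y x) as [|Hyx]; [lra|].
      assert (G x <= G y) by (apply hG; lra). lra. }
    assert (s <= x) by (apply Hs2, Hub). lra.
  - apply (const_on 1); try lra. intros x Hx.
    destruct (Rle_dec c (G x)) as [h|h]; auto.
    assert (x <= s) by (apply Hs1; split; lra). lra.
Qed.

(* [staircase h y N] rounds [y] down to a multiple of [h], capped at [N * h]. *)
Fixpoint staircase (h y : R) (N : nat) : R :=
  match N with
  | O => 0
  | S N' => staircase h y N' + (if Rle_dec (INR (S N') * h) y then h else 0)
  end.

Lemma staircase_full h y N : 0 < h -> INR N * h <= y -> staircase h y N = INR N * h.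
Proof.
  intros hh. induction N as [|N IH]; intros Hy; cbn [staircase].
  - simpl. ring.
  - rewrite S_INR in *. rewrite IH by lra.
    destruct (Rle_dec ((INR N + 1) * h) y); [ring|lra].
Qed.

Lemma staircase_approx h y N : 0 < h -> 0 <= y <= INR N * h ->
  0 <= y - staircase h y N < h.
Proof.
  intros hh. induction N as [|N IH]; intros Hy; cbn [staircase].
  - simpl in Hy. lra.
  - rewrite S_INR in *.
    destruct (Rle_dec y (INR N * h)) as [Hle|Hlt].
    + specialize (IH (conj (proj1 Hy) Hle)).
      destruct (Rle_dec ((INR N + 1) * h) y); lra.
    + rewrite staircase_full by lra.
      destruct (Rle_dec ((INR N + 1) * h) y); lra.
Qed.

Lemma ex_RInt_staircase (G : R -> R) h N a b : a <= b ->
  (forall x y, x <= y -> G x <= G y) -> ex_RInt (fun x => staircase h (G x) N) a b.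
Proof.
  intros hab hG. induction N as [|N IH]; cbn [staircase].
  - apply ex_RInt_const.
  - apply (ex_RInt_plus (V := R_NormedModule)); [exact IH|].
    eapply ex_RInt_ext;
      [|exact (ex_RInt_scal (V := R_NormedModule) _ a b h
                 (ex_RInt_indicator_nondecreasing G (INR (S N) * h) a b hab hG))].
    intros x _. change (h * (if Rle_dec (INR (S N) * h) (G x) then 1 else 0)
                        = (if Rle_dec (INR (S N) * h) (G x) then h else 0)).
    destruct (Rle_dec _ _); ring.
Qed.

Lemma ex_RInt_nondecreasing_bounded (F : R -> R) (m : R) (k : nat) a b :
  a <= b -> (forall x y, x <= y -> F x <= F y) ->
  (forall x, m <= F x <= m + INR k) -> ex_RInt F a b.
Proof.
  intros hab hF hb.
  (* the staircases of step [1/(n+1)] converge uniformly to [F] *)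
  set (g := fun (n : nat) x => m + staircase (/ INR (S n)) (F x - m) (S n * k)).
  assert (Hg : forall n, ex_RInt (g n) a b).
  { intros n. apply (ex_RInt_plus (V := R_NormedModule) (fun _ => m)).
    - apply ex_RInt_const.
    - apply ex_RInt_staircase with (G := fun x => F x - m); auto.
      intros x y hxy. specialize (hF x y hxy). lra. }
  destruct (filterlim_RInt g a b eventually eventually_filter F (fun n => RInt (g n) a b))
    as [If [_ HIf]]; [intros n; apply RInt_correct, Hg| |exists If; exact HIf].
  intros P [eps Heps].
  destruct (nfloor_ex (/ eps)) as [N0 HN0]; [left; apply Rinv_0_lt_compat, cond_pos|].
  exists N0. intros n Hn. apply Heps. intros t.
  assert (hn : INR N0 <= INR n) by (apply le_INR; lia).
  assert (hpos : 0 < / INR (S n)) by (apply Rinv_0_lt_compat, lt_0_INR; lia).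
  assert (Hs : INR (S n * k) * / INR (S n) = INR k).
  { rewrite mult_INR. field. apply not_0_INR. lia. }
  assert (H := staircase_approx (/ INR (S n)) (F t - m) (S n * k) hpos
                 ltac:(rewrite Hs; specialize (hb t); lra)).
  assert (hlt : / INR (S n) < eps).
  { rewrite <- (Rinv_inv eps). pose proof (cond_pos eps).
    apply Rinv_lt_contravar; rewrite S_INR; [|lra].
    apply Rmult_lt_0_compat; [apply Rinv_0_lt_compat; lra|pose proof (pos_INR n); lra]. }
  change (Rabs (g n t - F t) < eps). unfold g.
  rewrite Rabs_left1; lra.
Qed.

Lemma ex_RInt_nondecreasing (g : R -> R) a b : a <= b ->
  (forall x y, a <= x -> x <= y -> y <= b -> g x <= g y) -> ex_RInt g a b.
Proof.
  intros hab hg.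
  set (clamp := fun x => Rmax a (Rmin x b)).
  assert (Hclamp : forall x, a <= clamp x <= b).
  { intros x. split; [apply Rmax_l|apply Rmax_lub; [lra|apply Rmin_r]]. }
  assert (hgab : g a <= g b) by (apply hg; lra).
  destruct (nfloor_ex (g b - g a)) as [n Hn]; [lra|].
  apply ex_RInt_ext with (fun x => g (clamp x)).
  - intros x Hx. rewrite Rmin_left in Hx by lra. rewrite Rmax_right in Hx by lra.
    unfold clamp. rewrite Rmin_left by lra. rewrite Rmax_right by lra. reflexivity.
  - apply (ex_RInt_nondecreasing_bounded _ (g a) (S n)); auto.
    + intros x y hxy. apply hg; try apply Hclamp.
      apply Rle_max_compat_l, Rle_min_compat_r, hxy.
    + intros x. rewrite S_INR. specialize (Hclamp x).
      assert (g a <= g (clamp x)) by (apply hg; lra).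
      assert (g (clamp x) <= g b) by (apply hg; lra). lra.
Qed.

Lemma ex_RInt_nonincreasing (g : R -> R) a b : a <= b ->
  (forall x y, a <= x -> x <= y -> y <= b -> g y <= g x) -> ex_RInt g a b.
Proof.
  intros hab hg.
  assert (H : ex_RInt (fun x => - g x) a b).
  { apply ex_RInt_nondecreasing; auto. intros x y h1 h2 h3. specialize (hg x y h1 h2 h3). lra. }
  eapply ex_RInt_ext; [|exact (ex_RInt_opp (V := R_NormedModule) _ a b H)].
  intros x _. change (- - g x = g x). ring.
Qed.

(* a nonincreasing times a nondecreasing nonnegative function is the difference
   of the two nondecreasing functions [g a * k] and [(g a - g) * k] *)
Lemma ex_RInt_mult_nonincreasing_nondecreasing (g k : R -> R) a b : a <= b ->
  (forall x y, a <= x -> x <= y -> y <= b -> g y <= g x) ->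
  (forall x y, a <= x -> x <= y -> y <= b -> k x <= k y) ->
  (forall x, a <= x <= b -> 0 <= g x /\ 0 <= k x) ->
  ex_RInt (fun x => g x * k x) a b.
Proof.
  intros hab hg hk hp.
  assert (H1 : ex_RInt (fun x => g a * k x) a b).
  { apply ex_RInt_nondecreasing; auto. intros x y h1 h2 h3.
    apply Rmult_le_compat_l; [apply hp; lra|apply hk; lra]. }
  assert (H2 : ex_RInt (fun x => (g a - g x) * k x) a b).
  { apply ex_RInt_nondecreasing; auto. intros x y h1 h2 h3.
    assert (g x <= g a) by (apply hg; lra).
    assert (g y <= g x) by (apply hg; lra).
    apply Rmult_le_compat; [lra|apply hp; lra|lra|apply hk; lra]. }
  eapply ex_RInt_ext; [|exact (ex_RInt_minus (V := R_NormedModule) _ _ a b H1 H2)].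
  intros x _. change (g a * k x - (g a - g x) * k x = g x * k x). ring.
Qed.

Lemma RInt_plusR f g a b : ex_RInt f a b -> ex_RInt g a b ->
  RInt (fun x => f x + g x) a b = RInt f a b + RInt g a b.
Proof. exact (RInt_plus (V := R_CompleteNormedModule) f g a b). Qed.

Lemma RInt_scalR f a b l : ex_RInt f a b -> RInt (fun x => l * f x) a b = l * RInt f a b.
Proof. exact (RInt_scal (V := R_CompleteNormedModule) f a b l). Qed.

Lemma ex_RInt_plusR f g a b : ex_RInt f a b -> ex_RInt g a b ->
  ex_RInt (fun x => f x + g x) a b.
Proof. exact (ex_RInt_plus (V := R_NormedModule) f g a b). Qed.

Lemma ex_RInt_scalR f a b l : ex_RInt f a b -> ex_RInt (fun x => l * f x) a b.
Proof. exact (ex_RInt_scal (V := R_NormedModule) f a b l). Qed.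

Lemma RInt_ChaslesR f a b c : ex_RInt f a b -> ex_RInt f b c ->
  RInt f a b + RInt f b c = RInt f a c.
Proof. exact (RInt_Chasles (V := R_CompleteNormedModule) f a b c). Qed.

Lemma ex_RInt_inside (f : R -> R) a b c d : a <= c -> c <= d -> d <= b ->
  ex_RInt f a b -> ex_RInt f c d.
Proof.
  intros h1 h2 h3 H.
  apply (ex_RInt_Chasles_1 (V := R_CompleteNormedModule) f c d b); [lra|].
  apply (ex_RInt_Chasles_2 (V := R_CompleteNormedModule) f a c b); [lra|exact H].
Qed.

Lemma RInt_le_const (f : R -> R) a b m M : a <= b -> ex_RInt f a b ->
  (forall x, a < x < b -> m <= f x <= M) -> (b - a) * m <= RInt f a b <= (b - a) * M.
Proof.
  intros hab Hf Hb. rewrite <- !(RInt_const (V := R_CompleteNormedModule)).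
  split; apply RInt_le; auto; try apply ex_RInt_const; intros x hx; apply Hb, hx.
Qed.

Section FilterlimR.
Context {T : Type} {F : (T -> Prop) -> Prop} {FF : Filter F}.

Lemma filterlim_locally_Rabs (g : T -> R) L :
  filterlim g F (locally L) <-> forall eps, 0 < eps -> F (fun x => Rabs (g x - L) < eps).
Proof.
  split.
  - intros H eps he. apply (H (fun v => Rabs (v - L) < eps)).
    exists (mkposreal eps he). intros v Hv. exact Hv.
  - intros H P [eps HP]. apply filter_imp with (2 := H eps (cond_pos eps)).
    intros x Hx. apply HP, Hx.
Qed.

Lemma lim_plus (f g : T -> R) a b : filterlim f F (locally a) -> filterlim g F (locally b) ->
  filterlim (fun x => f x + g x) F (locally (a + b)).
Proof.
  intros Hf Hg. apply (filterlim_comp_2 f g Rplus Hf Hg).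
  exact (filterlim_plus (K := R_AbsRing) (V := R_NormedModule) a b).
Qed.

Lemma lim_mult (f g : T -> R) a b : filterlim f F (locally a) -> filterlim g F (locally b) ->
  filterlim (fun x => f x * g x) F (locally (a * b)).
Proof.
  intros Hf Hg. apply (filterlim_comp_2 f g Rmult Hf Hg).
  exact (filterlim_mult (K := R_AbsRing) a b).
Qed.

Lemma lim_opp (f : T -> R) a : filterlim f F (locally a) ->
  filterlim (fun x => - f x) F (locally (- a)).
Proof.
  intros Hf. eapply filterlim_comp; [exact Hf|].
  exact (filterlim_opp (K := R_AbsRing) (V := R_NormedModule) a).
Qed.

Lemma lim_minus (f g : T -> R) a b : filterlim f F (locally a) -> filterlim g F (locally b) ->
  filterlim (fun x => f x - g x) F (locally (a - b)).
Proof. intros Hf Hg. apply lim_plus; auto. apply lim_opp; auto. Qed.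

Lemma lim_inv (f : T -> R) a : a <> 0 -> filterlim f F (locally a) ->
  filterlim (fun x => / f x) F (locally (/ a)).
Proof.
  intros Ha Hf. eapply filterlim_comp; [exact Hf|].
  apply (filterlim_Rbar_inv (Finite a)). intros h. apply Ha. injection h; auto.
Qed.

End FilterlimR.

(** * Constancy from small increments *)

Lemma increment_bound_subdivided (D V : R -> R) a b (n : nat) : a <= b -> (0 < n)%nat ->
  (forall x y, a <= x -> x <= y -> y <= b -> Rabs (D y - D x) <= (y - x) * (V y - V x)) ->
  Rabs (D b - D a) <= (b - a) * (V b - V a) / INR n.
Proof.
  intros hab hn H. assert (hnr : 0 < INR n) by (apply lt_0_INR; lia).
  set (h := (b - a) / INR n).
  assert (hh : 0 <= h) by (unfold h; apply Rmult_le_pos; [lra|left; apply Rinv_0_lt_compat; lra]).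
  assert (Hk : forall k, (k <= n)%nat ->
            Rabs (D (a + INR k * h) - D a) <= h * (V (a + INR k * h) - V a)).
  { induction k as [|k IH]; intros hk.
    - simpl. rewrite Rmult_0_l, Rplus_0_r, Rminus_eq_0, Rabs_R0. lra.
    - assert (hk1 : INR (S k) * h <= b - a).
      { unfold h. assert (INR (S k) <= INR n) by (apply le_INR; lia).
        replace (b - a) with (INR n * ((b - a) / INR n)) at 2 by (field; lra).
        apply Rmult_le_compat_r; [exact hh|lra]. }
      specialize (IH ltac:(lia)). rewrite S_INR in *.
      assert (hk0 : 0 <= INR k * h) by (apply Rmult_le_pos; [apply pos_INR|exact hh]).
      assert (Hs := H (a + INR k * h) (a + (INR k + 1) * h) ltac:(lra) ltac:(nra) ltac:(lra)).
      replace (a + (INR k + 1) * h - (a + INR k * h)) with h in Hs by ring.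
      assert (Ht := Rabs_triang (D (a + (INR k + 1) * h) - D (a + INR k * h))
                                (D (a + INR k * h) - D a)).
      replace (D (a + (INR k + 1) * h) - D (a + INR k * h) + (D (a + INR k * h) - D a))
        with (D (a + (INR k + 1) * h) - D a) in Ht by ring.
      nra. }
  specialize (Hk n (Nat.le_refl n)).
  replace (a + INR n * h) with b in Hk by (unfold h; field; lra).
  replace ((b - a) * (V b - V a) / INR n) with (h * (V b - V a)) by (unfold h; field; lra).
  exact Hk.
Qed.

(* a discrete substitute for "D' = 0", usable when D is not differentiable *)
Lemma eq_of_increment_bound (D V : R -> R) a b : a <= b ->
  (forall x y, a <= x -> x <= y -> y <= b -> Rabs (D y - D x) <= (y - x) * (V y - V x)) ->
  D b = D a.
Proof.
  intros hab H.
  destruct (Req_dec (D b) (D a)) as [e|ne]; auto. exfalso.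
  set (d := Rabs (D b - D a)). assert (hd : 0 < d) by (apply Rabs_pos_lt; lra).
  set (Z := (b - a) * (V b - V a)).
  destruct (nfloor_ex (Rabs Z / d)) as [n0 Hn0].
  { apply Rmult_le_pos; [apply Rabs_pos|left; apply Rinv_0_lt_compat; lra]. }
  assert (H1 := increment_bound_subdivided D V a b (S n0) hab ltac:(lia) H).
  fold d Z in H1. rewrite S_INR in H1.
  assert (hn : 0 < INR n0 + 1) by (pose proof (pos_INR n0); lra).
  assert (HZ : Z <= Rabs Z) by apply Rle_abs.
  assert (Rabs Z < d * (INR n0 + 1)).
  { assert (Hlt : Rabs Z / d < INR n0 + 1) by lra.
    apply (Rmult_lt_compat_l d) in Hlt; [|lra].
    replace (d * (Rabs Z / d)) with (Rabs Z) in Hlt by (field; lra). lra. }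
  assert (Z / (INR n0 + 1) < d).
  { apply Rmult_lt_reg_r with (INR n0 + 1); [lra|].
    replace (Z / (INR n0 + 1) * (INR n0 + 1)) with Z by (field; lra). lra. }
  lra.
Qed.

Section DerivWithin.
Variable D : R -> Prop.

Lemma within_of_locally (g : R -> R) x L : filterlim g (locally x) (locally L) ->
  filterlim g (within (fun t => D t /\ t <> x) (locally x)) (locally L).
Proof.
  intros H P HP. specialize (H P HP). unfold within. simpl in *. unfold filtermap in *.
  apply filter_imp with (2 := H). intros; auto.
Qed.

Lemma within_forall x (P : R -> Prop) : (forall t, D t -> t <> x -> P t) ->
  within (fun t => D t /\ t <> x) (locally x) P.
Proof. intros H. unfold within. apply filter_forall. intros t [h1 h2]. apply H; auto. Qed.

Lemma deriv_within_of_derivable_pt_lim (f : R -> R) x l : derivable_pt_lim f x l ->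
  deriv_within D f x l.
Proof.
  intros H. apply filterlim_locally_Rabs. intros eps he.
  destruct (H eps he) as [d Hd]. exists d. intros t Ht [_ Htx].
  change (Rabs (t - x) < d) in Ht.
  specialize (Hd (t - x) ltac:(lra) Ht). rewrite Rplus_minus in Hd. exact Hd.
Qed.

Lemma deriv_within_continuous (f : R -> R) x l : deriv_within D f x l ->
  filterlim f (within (fun t => D t /\ t <> x) (locally x)) (locally (f x)).
Proof.
  intros H.
  assert (H2 : filterlim (fun t => (f t - f x) / (t - x) * (t - x) + f x)
                 (within (fun t => D t /\ t <> x) (locally x)) (locally (l * 0 + f x))).
  { apply lim_plus; [apply lim_mult; [exact H|]|apply filterlim_const].
    replace 0 with (x - x) by ring. apply lim_minus; [|apply filterlim_const].
    apply within_of_locally. intros P HP. exact HP. }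
  rewrite Rmult_0_r, Rplus_0_l in H2.
  eapply filterlim_ext_loc; [|exact H2].
  apply within_forall. intros t _ ht. field. lra.
Qed.

Lemma deriv_within_ext (f g : R -> R) x l : (forall t, D t -> f t = g t) -> D x ->
  deriv_within D f x l -> deriv_within D g x l.
Proof.
  intros He Hx H. eapply filterlim_ext_loc; [|exact H].
  apply within_forall. intros t ht _. rewrite !He; auto.
Qed.

Lemma deriv_within_mult (f g : R -> R) x lf lg : deriv_within D f x lf -> is_derive g x lg ->
  deriv_within D (fun t => f t * g t) x (lf * g x + f x * lg).
Proof.
  intros Hf Hg.
  assert (Hg' := deriv_within_of_derivable_pt_lim g x lg (proj1 (is_derive_Reals g x lg) Hg)).
  assert (H := lim_plus _ _ _ _ (lim_mult _ _ _ _ Hf (deriv_within_continuous g x lg Hg'))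
                              (lim_mult _ _ _ _ (filterlim_const (f x)) Hg')).
  eapply filterlim_ext_loc; [|exact H].
  apply within_forall. intros t _ ht. field. lra.
Qed.

Lemma deriv_within_inv (f : R -> R) x l : (forall t, D t -> f t <> 0) -> D x ->
  deriv_within D f x l -> deriv_within D (fun t => / f t) x (- l / (f x * f x)).
Proof.
  intros hf hx H.
  assert (Hc := lim_inv _ _ (hf x hx) (deriv_within_continuous f x l H)).
  assert (Hq := lim_mult _ _ _ _ (lim_opp _ _ H) (lim_mult _ _ _ _ Hc (filterlim_const (/ f x)))).
  replace (- l / (f x * f x)) with (- l * (/ f x * / f x)) by (field; apply hf, hx).
  eapply filterlim_ext_loc; [|exact Hq].
  apply within_forall. intros t ht htx.
  assert (f t <> 0) by (apply hf, ht). assert (f x <> 0) by (apply hf, hx).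
  field. repeat split; auto. lra.
Qed.

End DerivWithin.

Lemma at_left_between y b : y < b -> at_left b (fun z => y < z < b).
Proof.
  intros hy. assert (hp : 0 < b - y) by lra. exists (mkposreal _ hp).
  intros z Hz hz. change (Rabs (z - b) < b - y) in Hz. apply Rabs_lt_between' in Hz. lra.
Qed.

Lemma lim_le_at_left b (f g : R -> R) lf lg : at_left b (fun x => f x <= g x) ->
  filterlim f (at_left b) (locally lf) -> filterlim g (at_left b) (locally lg) -> lf <= lg.
Proof.
  exact (filterlim_le (F := at_left b) (FF := Proper_StrongProper _ (at_left_proper_filter b))
           f g lf lg).
Qed.

(** * Improper integrals over [a,b) *)

Section LeftOpenIntegral.
Variables a b : R.
Hypothesis Hab : a < b.

Definition is_RInt_upto (f : R -> R) (l : R) : Prop :=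
  (forall y, a <= y < b -> ex_RInt f a y) /\
  filterlim (fun y => RInt f a y) (at_left b) (locally l).

Lemma is_RInt_gen_of_upto f l : is_RInt_upto f l -> is_RInt_gen f (at_point a) (at_left b) l.
Proof.
  intros [Hex Hlim] P HP.
  apply Filter_prod with (Q := fun x => x = a)
    (R := fun y => a < y < b /\ P (RInt f a y)); [reflexivity| |].
  - apply filter_and; [apply at_left_between, Hab|apply (Hlim P HP)].
  - intros x y -> [hy HPy]. exists (RInt f a y). split; [|exact HPy].
    apply (RInt_correct (V := R_CompleteNormedModule)), Hex. lra.
Qed.

Lemma is_RInt_upto_of_gen f l : is_RInt_gen f (at_point a) (at_left b) l -> is_RInt_upto f l.
Proof.
  intros H.
  assert (Hev : at_left b (fun y => exists l, is_RInt f a y l)).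
  { destruct (H (fun _ => True)) as [Q R0 HQ HR HQR]; [apply filter_true|].
    apply filter_imp with R0; auto. intros y Hy.
    destruct (HQR a y HQ Hy) as [l' [Hl' _]]. exists l'. exact Hl'. }
  split.
  - intros y Hy.
    destruct (filter_ex (F := at_left b) _ (filter_and _ _ Hev (at_left_between y b (proj2 Hy))))
      as [z [[l' Hl'] Hz]].
    apply (ex_RInt_Chasles_1 (V := R_CompleteNormedModule) f a y z); [lra|].
    exists l'. exact Hl'.
  - intros P HP. destruct (H P HP) as [Q R0 HQ HR HQR].
    simpl. unfold filtermap. apply filter_imp with R0; auto.
    intros y Hy. destruct (HQR a y HQ Hy) as [l' [Hl' HPl]].
    rewrite (is_RInt_unique f a y l' Hl'). exact HPl.
Qed.

Lemma is_RInt_upto_ext (f g : R -> R) l : (forall x, a < x < b -> f x = g x) ->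
  is_RInt_upto f l -> is_RInt_upto g l.
Proof.
  intros He [Hex Hl].
  assert (Heq : forall y, a <= y < b -> forall x, Rmin a y < x < Rmax a y -> f x = g x).
  { intros y hy x hx. rewrite Rmin_left in hx by lra. rewrite Rmax_right in hx by lra.
    apply He. lra. }
  split.
  - intros y Hy. apply ex_RInt_ext with f; [apply Heq, Hy|apply Hex, Hy].
  - apply filterlim_ext_loc with (fun y => RInt f a y); auto.
    apply filter_imp with (2 := at_left_between a b Hab).
    intros y Hy. apply RInt_ext, Heq. lra.
Qed.

Lemma is_RInt_upto_lin (f g : R -> R) lf lg c d : is_RInt_upto f lf -> is_RInt_upto g lg ->
  is_RInt_upto (fun x => c * f x + d * g x) (c * lf + d * lg).
Proof.
  intros [Hxf Hlf] [Hxg Hlg]. split.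
  - intros y Hy. apply ex_RInt_plusR; apply ex_RInt_scalR; auto.
  - apply filterlim_ext_loc with (fun y => c * RInt f a y + d * RInt g a y).
    + apply filter_imp with (2 := at_left_between a b Hab). intros y Hy.
      assert (ef := Hxf y ltac:(lra)). assert (eg := Hxg y ltac:(lra)).
      rewrite RInt_plusR, !RInt_scalR by (auto; apply ex_RInt_scalR; auto). reflexivity.
    + apply lim_plus; apply lim_mult; auto; apply filterlim_const.
Qed.

Lemma is_RInt_upto_scal (f : R -> R) l c : is_RInt_upto f l ->
  is_RInt_upto (fun x => c * f x) (c * l).
Proof.
  intros H. assert (H2 := is_RInt_upto_lin f f l l c 0 H H).
  rewrite Rmult_0_l, Rplus_0_r in H2.
  eapply is_RInt_upto_ext; [|exact H2]. intros x _. cbv beta. ring.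
Qed.

Lemma is_RInt_upto_le (f g : R -> R) lf lg : is_RInt_upto f lf -> is_RInt_upto g lg ->
  (forall x, a < x < b -> f x <= g x) -> lf <= lg.
Proof.
  intros [Hxf Hlf] [Hxg Hlg] Hle. refine (lim_le_at_left b _ _ _ _ _ Hlf Hlg).
  apply filter_imp with (2 := at_left_between a b Hab). intros y Hy.
  apply RInt_le; [lra|apply Hxf; lra|apply Hxg; lra|]. intros x Hx; apply Hle; lra.
Qed.

Lemma is_RInt_upto_tail (f : R -> R) l y lo hi : is_RInt_upto f l -> a <= y < b ->
  (forall y', y < y' < b -> lo <= RInt f y y' <= hi) -> lo <= l - RInt f a y <= hi.
Proof.
  intros [Hx Hl] Hy Hb.
  assert (Hl' : filterlim (fun z => RInt f a z - RInt f a y) (at_left b)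
                  (locally (l - RInt f a y)))
    by (apply lim_minus; [exact Hl|apply filterlim_const]).
  assert (Hev : at_left b (fun z => lo <= RInt f a z - RInt f a y <= hi)).
  { apply filter_imp with (2 := at_left_between y b (proj2 Hy)). intros z Hz.
    assert (ez := Hx z ltac:(lra)).
    rewrite <- (RInt_ChaslesR f a y z) by (auto; apply ex_RInt_inside with a z; auto; lra).
    specialize (Hb z Hz). lra. }
  split.
  - refine (lim_le_at_left b (fun _ => lo) _ lo _ _ (filterlim_const lo) Hl').
    apply filter_imp with (2 := Hev). intros z Hz; apply Hz.
  - refine (lim_le_at_left b _ (fun _ => hi) _ hi _ Hl' (filterlim_const hi)).
    apply filter_imp with (2 := Hev). intros z Hz; apply Hz.
Qed.

Lemma is_RInt_upto_nonneg_bounded (f : R -> R) K : (forall y, a <= y < b -> ex_RInt f a y) ->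
  (forall x, a < x < b -> 0 <= f x) -> (forall y, a <= y < b -> RInt f a y <= K) ->
  exists l, is_RInt_upto f l.
Proof.
  intros Hx Hpos HK.
  (* the partial integrals increase, so they converge to their supremum *)
  set (E := fun v => exists y, a <= y < b /\ v = RInt f a y).
  assert (bE : bound E) by (exists K; intros v [y [Hy ->]]; apply HK, Hy).
  assert (nE : exists v, E v) by (exists (RInt f a a), a; split; [lra|auto]).
  destruct (completeness E bE nE) as [l [Hl1 Hl2]].
  assert (Hmono : forall y z, a <= y -> y <= z < b -> RInt f a y <= RInt f a z).
  { intros y z hy hz. assert (ez := Hx z ltac:(lra)).
    assert (eyz : ex_RInt f y z) by (apply ex_RInt_inside with a z; auto; lra).
    rewrite <- (RInt_ChaslesR f a y z) by (auto; apply ex_RInt_inside with a z; auto; lra).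
    assert (0 <= RInt f y z) by (apply RInt_ge_0; auto; try lra; intros x hx; apply Hpos; lra).
    lra. }
  exists l. split; auto.
  apply filterlim_locally_Rabs. intros eps he.
  assert (Hne : exists y, a <= y < b /\ l - eps < RInt f a y).
  { apply Classical_Prop.NNPP. intro hn.
    assert (l <= l - eps) by (apply Hl2; intros v [y [Hy ->]];
                              apply Rnot_lt_le; intro h; apply hn; exists y; auto).
    lra. }
  destruct Hne as [y0 [Hy0 Hy0']].
  apply filter_imp with (2 := at_left_between y0 b (proj2 Hy0)). intros z Hz.
  assert (RInt f a z <= l) by (apply Hl1; exists z; split; [lra|auto]).
  assert (RInt f a y0 <= RInt f a z) by (apply Hmono; lra).
  apply Rabs_lt_between'. lra.
Qed.

End LeftOpenIntegral.

Definition ompow (m b : R) : R := Rpower (1 - b) m.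

Lemma ompow_pos m b : 0 < ompow m b.
Proof. apply exp_pos. Qed.

Lemma ompow_0 m : ompow m 0 = 1.
Proof. unfold ompow, Rpower. rewrite Rminus_0_r, ln_1, Rmult_0_r. apply exp_0. Qed.

Lemma ompow_split m b : b < 1 -> ompow m b = (1 - b) * ompow (m - 1) b.
Proof.
  intros hb. unfold ompow. replace m with (1 + (m - 1)) at 1 by ring.
  rewrite Rpower_plus, Rpower_1 by lra. reflexivity.
Qed.

Lemma ompow_nonincreasing m x y : 0 <= m -> x <= y < 1 -> ompow m y <= ompow m x.
Proof. intros. apply Rle_Rpower_l; lra. Qed.

Lemma ompow_nondecreasing m x y : m <= 0 -> x <= y < 1 -> ompow m x <= ompow m y.
Proof.
  intros hm hxy. unfold ompow. replace m with (- (- m)) by ring.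
  rewrite (Rpower_Ropp (1 - x) (- m)), (Rpower_Ropp (1 - y) (- m)).
  apply Rinv_le_contravar; [apply exp_pos|]. apply Rle_Rpower_l; lra.
Qed.

Lemma is_derive_ompow m b : b < 1 -> is_derive (ompow m) b (- m * ompow (m - 1) b).
Proof.
  intros hb.
  assert (H1 : is_derive (fun z => Rpower z m) (1 - b) (m * Rpower (1 - b) (m - 1)))
    by (apply is_derive_Reals, derivable_pt_lim_power; lra).
  assert (H2 : is_derive (fun z : R => 1 - z) b (-1)).
  { apply is_derive_Reals. replace (-1) with (0 - 1) by ring.
    apply derivable_pt_lim_minus; [apply derivable_pt_lim_const|apply derivable_pt_lim_id]. }
  replace (- m * ompow (m - 1) b) with (scal (-1) (m * Rpower (1 - b) (m - 1)));
    [exact (is_derive_comp _ _ b _ _ H1 H2)|].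
  change (-1 * (m * ompow (m - 1) b) = - m * ompow (m - 1) b). ring.
Qed.

Lemma is_RInt_ompow m y1 y2 : m <> 0 -> y1 < 1 -> y2 < 1 ->
  is_RInt (ompow (m - 1)) y1 y2 ((ompow m y1 - ompow m y2) / m).
Proof.
  intros hm h1 h2.
  assert (Hlt : forall x, Rmin y1 y2 <= x <= Rmax y1 y2 -> x < 1).
  { intros x [_ hx]. apply Rle_lt_trans with (1 := hx). apply Rmax_lub_lt; lra. }
  assert (H := is_RInt_derive (V := R_CompleteNormedModule)
                 (fun z => (- / m) * ompow m z) (ompow (m - 1)) y1 y2).
  replace ((ompow m y1 - ompow m y2) / m) with ((- / m) * ompow m y2 - (- / m) * ompow m y1)
    by (field; lra).
  apply H.
  - intros x hx.
    replace (ompow (m - 1) x) with (- / m * (- m * ompow (m - 1) x)) by (field; exact hm).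
    apply is_derive_scal, is_derive_ompow, Hlt, hx.
  - intros x hx. apply (ex_derive_continuous (K := R_AbsRing) (V := R_NormedModule)).
    eexists. apply is_derive_ompow, Hlt, hx.
Qed.

Lemma ompow_at_left_1 m : 0 < m -> filterlim (ompow m) (at_left 1) (locally 0).
Proof.
  intros hm. apply filterlim_locally_Rabs. intros eps he.
  set (d := Rmin (exp (ln eps / m)) 1).
  assert (hd : 0 < d) by (apply Rmin_glb_lt; [apply exp_pos|lra]).
  assert (hd1 : d <= 1) by apply Rmin_r.
  apply filter_imp with (2 := at_left_between (1 - d) 1 ltac:(lra)). intros y [hy1 hy2].
  rewrite Rminus_0_r, Rabs_pos_eq by (left; apply ompow_pos).
  unfold ompow, Rpower. rewrite <- (exp_ln eps he). apply exp_increasing.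
  assert (h1 : 1 - y < exp (ln eps / m)) by (assert (d <= exp (ln eps / m)) by apply Rmin_l; lra).
  apply ln_increasing in h1; [|lra]. rewrite ln_exp in h1.
  apply Rmult_lt_reg_r with (/ m); [apply Rinv_0_lt_compat; lra|].
  replace (m * ln (1 - y) * / m) with (ln (1 - y)) by (field; lra). exact h1.
Qed.

(** * The survival function and the profile *)

Section Model.
Variables (beta : R -> R) (M mu : R).
Hypothesis mu_range : 0 < mu < 1.
Hypothesis beta_pos : forall a, 0 <= a -> 0 < beta a.
Hypothesis beta_le : forall a, 0 <= a -> beta a <= M.
Hypothesis beta_nonincreasing : forall a1 a2, 0 <= a1 -> a1 <= a2 -> beta a2 <= beta a1.

Definition surv (x : R) : R := exp (- Bfun beta x).
Definition dens (x : R) : R := beta x * surv x.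

Lemma ex_RInt_beta a b : 0 <= a -> a <= b -> ex_RInt beta a b.
Proof.
  intros. apply ex_RInt_nonincreasing; auto.
  intros x y h1 h2 h3. apply beta_nonincreasing; lra.
Qed.

Lemma Bfun_0 : Bfun beta 0 = 0.
Proof. exact (RInt_point (V := R_CompleteNormedModule) 0 beta). Qed.

Lemma Bfun_increment_bounds x y : 0 <= x <= y ->
  (y - x) * beta y <= Bfun beta y - Bfun beta x <= (y - x) * beta x.
Proof.
  intros h. unfold Bfun.
  assert (HC := RInt_ChaslesR beta 0 x y (ex_RInt_beta 0 x ltac:(lra) ltac:(lra))
                                         (ex_RInt_beta x y ltac:(lra) ltac:(lra))).
  replace (RInt beta 0 y - RInt beta 0 x) with (RInt beta x y) by lra.
  apply RInt_le_const; [lra|apply ex_RInt_beta; lra|].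
  intros z hz. split; apply beta_nonincreasing; lra.
Qed.

Lemma is_derive_Bfun x : 0 < x -> continuity_pt beta x -> is_derive (Bfun beta) x (beta x).
Proof.
  intros hx hc. apply (is_derive_RInt beta (Bfun beta) 0 x).
  - exists (mkposreal x hx). intros z hz. change (Rabs (z - x) < x) in hz.
    apply Rabs_lt_between' in hz.
    apply (RInt_correct (V := R_CompleteNormedModule)), ex_RInt_beta; lra.
  - apply continuity_pt_filterlim, hc.
Qed.

Lemma surv_pos x : 0 < surv x.
Proof. apply exp_pos. Qed.

Lemma surv_0 : surv 0 = 1.
Proof. unfold surv. rewrite Bfun_0, Ropp_0. apply exp_0. Qed.

(* the mean-value bounds [-surv' = dens] would give if [beta] were continuous *)
Lemma surv_increment_bounds x y : 0 <= x <= y ->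
  (y - x) * dens y <= surv x - surv y <= (y - x) * dens x.
Proof.
  intros h. assert (Hb := Bfun_increment_bounds x y h). unfold dens, surv.
  set (d := Bfun beta y - Bfun beta x) in *.
  assert (Ey : exp (- Bfun beta y) = exp (- Bfun beta x) * exp (- d))
    by (rewrite <- exp_plus; f_equal; unfold d; ring).
  assert (E1 := exp_ineq1_le (- d)). assert (E2 := exp_ineq1_le d).
  assert (E3 : exp d * exp (- d) = 1)
    by (rewrite <- exp_plus, Rplus_opp_r; apply exp_0).
  assert (Px := exp_pos (- Bfun beta x)). assert (Pd := exp_pos (- d)).
  assert (Pbx : 0 < beta x) by (apply beta_pos; lra).
  assert (Pby : 0 < beta y) by (apply beta_pos; lra).
  rewrite Ey. split.
  - assert (d * exp (- d) <= 1 - exp (- d)) by nra.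
    assert ((y - x) * beta y * exp (- d) <= d * exp (- d)) by nra.
    nra.
  - nra.
Qed.

Lemma dens_pos x : 0 <= x -> 0 < dens x.
Proof. intros. apply Rmult_lt_0_compat; [apply beta_pos; auto|apply surv_pos]. Qed.

Lemma surv_nonincreasing x y : 0 <= x <= y -> surv y <= surv x.
Proof.
  intros h. assert (H := surv_increment_bounds x y h).
  assert (0 <= (y - x) * dens y) by (apply Rmult_le_pos; [lra|left; apply dens_pos; lra]).
  lra.
Qed.

Lemma surv_le_1 x : 0 <= x -> surv x <= 1.
Proof. intros h. rewrite <- surv_0. apply surv_nonincreasing; lra. Qed.

Lemma dens_le x : 0 <= x -> dens x <= M.
Proof.
  intros h. unfold dens. assert (H1 := beta_le x h). assert (H2 := surv_le_1 x h).
  assert (H3 := surv_pos x). assert (H4 := beta_pos x h). nra.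
Qed.

Lemma dens_nonincreasing x y : 0 <= x <= y -> dens y <= dens x.
Proof.
  intros h. apply Rmult_le_compat; [left; apply beta_pos; lra|left; apply surv_pos| |].
  - apply beta_nonincreasing; lra.
  - apply surv_nonincreasing; lra.
Qed.

Lemma ex_RInt_dens_scaled s a b : 0 <= a -> a <= b -> ex_RInt (fun z => dens (exp s * z)) a b.
Proof.
  intros. assert (He := exp_pos s). apply ex_RInt_nonincreasing; auto. intros x z h1 h2 h3.
  apply dens_nonincreasing. split; [nra|]. apply Rmult_le_compat_l; lra.
Qed.

Lemma RInt_dens_lipschitz x0 x : 0 <= x0 -> 0 <= x ->
  Rabs (RInt dens 0 x - RInt dens 0 x0) <= M * Rabs (x - x0).
Proof.
  intros h0 h.
  assert (G : forall u v, 0 <= u <= v -> 0 <= RInt dens 0 v - RInt dens 0 u <= M * (v - u)).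
  { intros u v huv.
    assert (ex : forall p q, 0 <= p <= q -> ex_RInt dens p q).
    { intros p q hpq. eapply ex_RInt_ext; [|apply (ex_RInt_dens_scaled 0 p q); lra].
      intros z _. rewrite exp_0, Rmult_1_l. reflexivity. }
    rewrite <- (RInt_ChaslesR dens 0 u v) by (apply ex; lra).
    assert (Hb := RInt_le_const dens u v 0 M ltac:(lra) (ex u v ltac:(lra))).
    assert ((v - u) * 0 <= RInt dens u v <= (v - u) * M)
      by (apply Hb; intros z hz; split; [left; apply dens_pos|apply dens_le]; lra).
    nra. }
  destruct (Rle_dec x0 x).
  - assert (H := G x0 x ltac:(lra)). rewrite !Rabs_pos_eq by lra. lra.
  - assert (H := G x x0 ltac:(lra)).
    rewrite (Rabs_left1 (x - x0)), Rabs_left1 by lra. lra.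
Qed.

Lemma M_pos : 0 < M.
Proof. apply Rlt_le_trans with (beta 0); [apply beta_pos|apply beta_le]; lra. Qed.

Definition profile (t b : R) : R := surv (exp t * b) * ompow (mu - 1) b.
Definition dens_flux (t b : R) : R := dens (exp t * b) * ompow mu b.
Definition dens_moment (t b : R) : R := dens (exp t * b) * (b * ompow (mu - 1) b).

Lemma is_RInt_ompow_mu y1 y2 : y1 < 1 -> y2 < 1 ->
  is_RInt (ompow (mu - 1)) y1 y2 ((ompow mu y1 - ompow mu y2) / mu).
Proof. apply is_RInt_ompow. lra. Qed.

Lemma ex_RInt_profile t y : 0 <= y < 1 -> ex_RInt (profile t) 0 y.
Proof.
  intros hy. assert (He := exp_pos t).
  apply ex_RInt_mult_nonincreasing_nondecreasing; try lra.
  - intros x z h1 h2 h3. apply surv_nonincreasing. split; [nra|]. apply Rmult_le_compat_l; lra.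
  - intros x z h1 h2 h3. apply ompow_nondecreasing; lra.
  - intros x hx. split; left; [apply surv_pos|apply ompow_pos].
Qed.

Lemma ex_RInt_dens_flux t y : 0 <= y < 1 -> ex_RInt (dens_flux t) 0 y.
Proof.
  intros hy. assert (He := exp_pos t). apply ex_RInt_nonincreasing; [lra|].
  intros x z h1 h2 h3. apply Rmult_le_compat.
  - left. apply dens_pos. nra.
  - left. apply ompow_pos.
  - apply dens_nonincreasing. split; [nra|]. apply Rmult_le_compat_l; lra.
  - apply ompow_nonincreasing; lra.
Qed.

Lemma ex_RInt_dens_moment t y : 0 <= y < 1 -> ex_RInt (dens_moment t) 0 y.
Proof.
  intros hy. assert (He := exp_pos t).
  apply ex_RInt_mult_nonincreasing_nondecreasing; try lra.
  - intros x z h1 h2 h3. apply dens_nonincreasing. split; [nra|]. apply Rmult_le_compat_l; lra.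
  - intros x z h1 h2 h3. apply Rmult_le_compat; try lra; [left; apply ompow_pos|].
    apply ompow_nondecreasing; lra.
  - intros x hx. assert (H := ompow_pos (mu - 1) x).
    split; [left; apply dens_pos; nra|nra].
Qed.

Section FixedTime.
Variable t : R.

Lemma dens_flux_increment_bounds y1 y2 : 0 <= y1 <= y2 -> y2 < 1 ->
  Rabs (exp t * RInt (dens_flux t) y1 y2
        - (surv (exp t * y1) - surv (exp t * y2)) * ompow mu y1)
  <= exp t * (y2 - y1) * (dens (exp t * y1) * ompow mu y1 - dens (exp t * y2) * ompow mu y2).
Proof.
  intros h1 h2. assert (He := exp_pos t).
  assert (Hy : 0 <= exp t * y1 <= exp t * y2)
    by (split; [apply Rmult_le_pos|apply Rmult_le_compat_l]; lra).
  assert (Ha' := dens_pos (exp t * y2) ltac:(lra)).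
  assert (Haa := dens_nonincreasing _ _ Hy).
  assert (HP2 := ompow_pos mu y2).
  assert (HPP := ompow_nonincreasing mu y1 y2 ltac:(lra) ltac:(lra)).
  assert (HF := surv_increment_bounds _ _ Hy).
  replace (exp t * y2 - exp t * y1) with (exp t * (y2 - y1)) in HF by ring.
  assert (HA : (y2 - y1) * (dens (exp t * y2) * ompow mu y2) <= RInt (dens_flux t) y1 y2
               <= (y2 - y1) * (dens (exp t * y1) * ompow mu y1)).
  { apply RInt_le_const;
      [lra|apply ex_RInt_inside with 0 y2; try lra; apply ex_RInt_dens_flux; lra|].
    intros x hx. unfold dens_flux.
    assert (exp t * y1 <= exp t * x <= exp t * y2) by (split; apply Rmult_le_compat_l; lra).
    assert (dens (exp t * y2) <= dens (exp t * x) <= dens (exp t * y1))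
      by (split; apply dens_nonincreasing; lra).
    assert (ompow mu y2 <= ompow mu x <= ompow mu y1) by (split; apply ompow_nonincreasing; lra).
    split; apply Rmult_le_compat; lra. }
  assert (Hlo : (exp t * (y2 - y1) * dens (exp t * y2)) * ompow mu y2
                <= (exp t * (y2 - y1) * dens (exp t * y2)) * ompow mu y1)
    by (apply Rmult_le_compat_l; [|lra]; apply Rmult_le_pos; [apply Rmult_le_pos|]; lra).
  assert (H1 : exp t * ((y2 - y1) * (dens (exp t * y2) * ompow mu y2))
               <= exp t * RInt (dens_flux t) y1 y2
               <= exp t * ((y2 - y1) * (dens (exp t * y1) * ompow mu y1)))
    by (split; apply Rmult_le_compat_l; lra).
  assert (H2 : (exp t * (y2 - y1) * dens (exp t * y2)) * ompow mu y1
               <= (surv (exp t * y1) - surv (exp t * y2)) * ompow mu y1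
               <= (exp t * (y2 - y1) * dens (exp t * y1)) * ompow mu y1)
    by (split; apply Rmult_le_compat_r; lra).
  apply Rabs_le. split; lra.
Qed.

Lemma profile_increment_bounds y1 y2 Y : 0 <= y1 <= y2 -> y2 <= Y -> Y < 1 ->
  0 <= mu * RInt (profile t) y1 y2 - surv (exp t * y2) * (ompow mu y1 - ompow mu y2)
    <= (y2 - y1) * (mu * ompow (mu - 1) Y * (surv (exp t * y1) - surv (exp t * y2))).
Proof.
  intros h1 h2 h3. assert (He := exp_pos t).
  assert (Hy : 0 <= exp t * y1 <= exp t * y2)
    by (split; [apply Rmult_le_pos|apply Rmult_le_compat_l]; lra).
  assert (Hr := is_RInt_ompow_mu y1 y2 ltac:(lra) ltac:(lra)).
  assert (Hexr : ex_RInt (ompow (mu - 1)) y1 y2) by (eexists; exact Hr).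
  assert (HmuRr : mu * RInt (ompow (mu - 1)) y1 y2 = ompow mu y1 - ompow mu y2)
    by (rewrite (is_RInt_unique _ _ _ _ Hr); field; lra).
  assert (HRr : 0 <= RInt (ompow (mu - 1)) y1 y2 <= (y2 - y1) * ompow (mu - 1) Y).
  { assert (H := RInt_le_const (ompow (mu - 1)) y1 y2 0 (ompow (mu - 1) Y) ltac:(lra) Hexr).
    assert ((y2 - y1) * 0 <= RInt (ompow (mu - 1)) y1 y2 <= (y2 - y1) * ompow (mu - 1) Y)
      by (apply H; intros x hx; split; [left; apply ompow_pos|apply ompow_nondecreasing; lra]).
    lra. }
  assert (HF := surv_nonincreasing _ _ Hy).
  assert (HA : surv (exp t * y2) * RInt (ompow (mu - 1)) y1 y2 <= RInt (profile t) y1 y2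
               <= surv (exp t * y1) * RInt (ompow (mu - 1)) y1 y2).
  { assert (ex : ex_RInt (profile t) y1 y2)
      by (apply ex_RInt_inside with 0 y2; try lra; apply ex_RInt_profile; lra).
    rewrite <- !RInt_scalR by exact Hexr.
    split; apply RInt_le; auto; try lra; try apply ex_RInt_scalR, Hexr;
      intros x hx; unfold profile;
      (apply Rmult_le_compat_r; [left; apply ompow_pos|]);
      apply surv_nonincreasing; split; try apply Rmult_le_compat_l;
      try apply Rmult_le_pos; lra. }
  rewrite <- HmuRr.
  assert (H1 : mu * (surv (exp t * y2) * RInt (ompow (mu - 1)) y1 y2)
               <= mu * RInt (profile t) y1 y2
               <= mu * (surv (exp t * y1) * RInt (ompow (mu - 1)) y1 y2))
    by (split; apply Rmult_le_compat_l; lra).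
  assert (H2 : (surv (exp t * y1) - surv (exp t * y2)) * RInt (ompow (mu - 1)) y1 y2
               <= (surv (exp t * y1) - surv (exp t * y2)) * ((y2 - y1) * ompow (mu - 1) Y))
    by (apply Rmult_le_compat_l; lra).
  split; nra.
Qed.

Definition flux_balance (y : R) : R :=
  RInt (fun b => exp t * dens_flux t b + mu * profile t b) 0 y + surv (exp t * y) * ompow mu y.

Lemma flux_balance_increment Y y1 y2 : 0 <= y1 -> y1 <= y2 -> y2 <= Y -> Y < 1 ->
  Rabs (flux_balance y2 - flux_balance y1) <= (y2 - y1) *
   ((- exp t * dens (exp t * y2) * ompow mu y2 - mu * ompow (mu - 1) Y * surv (exp t * y2)) -
    (- exp t * dens (exp t * y1) * ompow mu y1 - mu * ompow (mu - 1) Y * surv (exp t * y1))).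
Proof.
  intros h1 h2 h3 h4.
  assert (exK : forall u v, 0 <= u <= v -> v < 1 -> ex_RInt (dens_flux t) u v)
    by (intros; apply ex_RInt_inside with 0 v; try lra; apply ex_RInt_dens_flux; lra).
  assert (exI : forall u v, 0 <= u <= v -> v < 1 -> ex_RInt (profile t) u v)
    by (intros; apply ex_RInt_inside with 0 v; try lra; apply ex_RInt_profile; lra).
  assert (Hsplit : forall u v, 0 <= u <= v -> v < 1 ->
    RInt (fun b => exp t * dens_flux t b + mu * profile t b) u v
    = exp t * RInt (dens_flux t) u v + mu * RInt (profile t) u v).
  { intros u v huv hv.
    rewrite RInt_plusR, !RInt_scalR by (auto; apply ex_RInt_scalR; auto). reflexivity. }
  assert (HC := RInt_ChaslesR (fun b => exp t * dens_flux t b + mu * profile t b) 0 y1 y2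
    ltac:(apply ex_RInt_plusR; apply ex_RInt_scalR; [apply exK|apply exI]; lra)
    ltac:(apply ex_RInt_plusR; apply ex_RInt_scalR; [apply exK|apply exI]; lra)).
  assert (X1 := dens_flux_increment_bounds y1 y2 ltac:(lra) ltac:(lra)).
  assert (X2 := profile_increment_bounds y1 y2 Y ltac:(lra) h3 h4).
  unfold flux_balance. rewrite <- HC, (Hsplit y1 y2) by lra.
  apply Rabs_le. apply Rabs_le_between in X1. nra.
Qed.

Lemma flux_balance_eq_1 y : 0 <= y < 1 -> flux_balance y = 1.
Proof.
  intros hy.
  rewrite (eq_of_increment_bound flux_balance
    (fun z => - exp t * dens (exp t * z) * ompow mu z - mu * ompow (mu - 1) y * surv (exp t * z))
    0 y); [|lra|intros; apply (flux_balance_increment y); lra].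
  unfold flux_balance.
  rewrite (RInt_point (V := R_CompleteNormedModule)), Rmult_0_r, surv_0, ompow_0.
  change (0 + 1 * 1 = 1). ring.
Qed.

End FixedTime.

Lemma is_RInt_upto_dens_flux t I : is_RInt_upto 0 1 (profile t) I ->
  is_RInt_upto 0 1 (fun b => exp t * dens_flux t b) (1 - mu * I).
Proof.
  intros [Hex Hl]. split; [intros y hy; apply ex_RInt_scalR, ex_RInt_dens_flux; auto|].
  apply filterlim_ext_loc
    with (fun y => 1 - surv (exp t * y) * ompow mu y - mu * RInt (profile t) 0 y).
  - apply filter_imp with (2 := at_left_between 0 1 Rlt_0_1). intros y hy.
    assert (H := flux_balance_eq_1 t y ltac:(lra)). unfold flux_balance in H.
    assert (eK := ex_RInt_dens_flux t y ltac:(lra)).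
    assert (eI := ex_RInt_profile t y ltac:(lra)).
    rewrite RInt_plusR, !RInt_scalR in H by (auto; apply ex_RInt_scalR; auto).
    rewrite RInt_scalR by exact eK. lra.
  - replace (1 - mu * I) with ((1 - 0) - mu * I) by ring.
    apply lim_minus;
      [apply lim_minus; [apply filterlim_const|]|apply lim_mult; auto; apply filterlim_const].
    (* [surv] lies in [(0,1]] and [(1-y)^mu -> 0] *)
    apply (filterlim_le_le (F := at_left 1) (fun _ => 0) _ (ompow mu) 0);
      [|apply filterlim_const|apply ompow_at_left_1; lra].
    apply filter_imp with (2 := at_left_between 0 1 Rlt_0_1). intros y hy.
    assert (He := exp_pos t).
    assert (H1 := surv_pos (exp t * y)). assert (H2 := ompow_pos mu y).
    assert (H3 := surv_le_1 (exp t * y) ltac:(apply Rmult_le_pos; lra)).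
    split; [apply Rmult_le_pos; lra|].
    rewrite <- (Rmult_1_l (ompow mu y)) at 2. apply Rmult_le_compat_r; lra.
Qed.

Lemma dens_moment_bounds t b : 0 <= b < 1 -> 0 <= dens_moment t b <= M * ompow (mu - 1) b.
Proof.
  intros hb. unfold dens_moment. assert (He := exp_pos t).
  assert (H1 := dens_pos (exp t * b) ltac:(nra)). assert (H2 := dens_le (exp t * b) ltac:(nra)).
  assert (H3 := ompow_pos (mu - 1) b).
  split; [apply Rmult_le_pos; [lra|apply Rmult_le_pos; lra]|].
  apply Rle_trans with (M * (b * ompow (mu - 1) b)).
  - apply Rmult_le_compat_r; [apply Rmult_le_pos|]; lra.
  - apply Rmult_le_compat_l; [apply Rlt_le, M_pos|nra].
Qed.

Lemma RInt_dens_moment_bounds t y1 y2 : 0 <= y1 <= y2 -> y2 < 1 ->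
  0 <= RInt (dens_moment t) y1 y2 <= M * ((ompow mu y1 - ompow mu y2) / mu).
Proof.
  intros h1 h2.
  assert (Hex : ex_RInt (dens_moment t) y1 y2)
    by (apply ex_RInt_inside with 0 y2; try lra; apply ex_RInt_dens_moment; lra).
  assert (Hr := is_RInt_ompow_mu y1 y2 ltac:(lra) ltac:(lra)).
  split.
  - apply RInt_ge_0; auto; try lra. intros x hx; apply dens_moment_bounds; lra.
  - rewrite <- (is_RInt_unique _ _ _ _ Hr), <- RInt_scalR by (eexists; exact Hr).
    apply RInt_le; auto; try lra; [apply ex_RInt_scalR; eexists; exact Hr|].
    intros x hx; apply dens_moment_bounds; lra.
Qed.

Lemma RInt_dens_moment_tail_le t y1 y2 : 0 <= y1 <= y2 -> y2 < 1 ->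
  0 <= RInt (dens_moment t) y1 y2 <= M * ompow mu y1 / mu.
Proof.
  intros h1 h2. assert (H := RInt_dens_moment_bounds t y1 y2 h1 h2).
  assert (0 <= M * ompow mu y2 / mu).
  { apply Rmult_le_pos; [apply Rmult_le_pos; [apply Rlt_le, M_pos|apply Rlt_le, ompow_pos]|].
    apply Rlt_le, Rinv_0_lt_compat. lra. }
  unfold Rdiv in *. split; nra.
Qed.

Definition moment (t : R) : R := RInt_gen (dens_moment t) (at_point 0) (at_left 1).

Lemma is_RInt_upto_moment t : is_RInt_upto 0 1 (dens_moment t) (moment t).
Proof.
  destruct (is_RInt_upto_nonneg_bounded 0 1 Rlt_0_1 (dens_moment t) (M / mu)) as [l Hl].
  - intros y hy. apply ex_RInt_dens_moment; auto.
  - intros x hx. apply dens_moment_bounds; lra.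
  - intros y hy. assert (H := RInt_dens_moment_tail_le t 0 y ltac:(lra) ltac:(lra)).
    rewrite ompow_0, Rmult_1_r in H. lra.
  - apply is_RInt_upto_of_gen. unfold moment.
    apply (RInt_gen_correct (V := R_CompleteNormedModule)
             (Fb := at_left 1) (FFb := Proper_StrongProper _ (at_left_proper_filter 1))).
    exists l. exact (is_RInt_gen_of_upto 0 1 Rlt_0_1 _ _ Hl).
Qed.

Lemma moment_tail t y : 0 <= y < 1 ->
  0 <= moment t - RInt (dens_moment t) 0 y <= M * ompow mu y / mu.
Proof.
  intros hy. apply (is_RInt_upto_tail 0 1 (dens_moment t) (moment t) y); auto.
  - apply is_RInt_upto_moment.
  - intros y' hy'. apply RInt_dens_moment_tail_le; lra.
Qed.

(** * Continuity of the moment *)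

Definition dens_mass (s y : R) : R := RInt (fun b => dens (exp s * b)) 0 y.

Lemma dens_mass_eq s y : 0 <= y -> dens_mass s y = / exp s * RInt dens 0 (exp s * y).
Proof.
  intros hy. assert (He := exp_pos s).
  assert (ex : ex_RInt dens 0 (exp s * y)).
  { eapply ex_RInt_ext; [|apply (ex_RInt_dens_scaled 0 0 (exp s * y)); nra].
    intros z _. rewrite exp_0, Rmult_1_l. reflexivity. }
  assert (H := is_RInt_comp_lin dens (exp s) 0 0 y (RInt dens 0 (exp s * y))).
  rewrite Rmult_0_r, !Rplus_0_r in H.
  assert (H2 : RInt (fun z => exp s * dens (exp s * z)) 0 y = RInt dens 0 (exp s * y)).
  { apply is_RInt_unique. eapply is_RInt_ext; [|exact (H (RInt_correct _ _ _ ex))].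
    intros x _. change (exp s * dens (exp s * x + 0) = exp s * dens (exp s * x)).
    rewrite Rplus_0_r. reflexivity. }
  rewrite RInt_scalR in H2 by (apply ex_RInt_dens_scaled; lra).
  unfold dens_mass. rewrite <- H2, <- Rmult_assoc, Rinv_l, Rmult_1_l; [reflexivity|lra].
Qed.

Lemma dens_mass_continuous s y : 0 <= y ->
  filterlim (fun t => dens_mass t y) (locally s) (locally (dens_mass s y)).
Proof.
  intros hy. rewrite dens_mass_eq by auto.
  apply filterlim_ext with (fun t => / exp t * RInt dens 0 (exp t * y));
    [intros t; rewrite dens_mass_eq; auto|].
  assert (Hexp : filterlim exp (locally s) (locally (exp s))).
  { apply (ex_derive_continuous (K := R_AbsRing) (V := R_NormedModule)).
    exists (exp s). apply is_derive_exp. }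
  apply lim_mult; [apply lim_inv; [apply Rgt_not_eq, exp_pos|exact Hexp]|].
  apply filterlim_locally_Rabs. intros eps he. assert (HM := M_pos).
  assert (Hl := proj1 (filterlim_locally_Rabs _ _)
                  (lim_mult _ _ _ _ Hexp (filterlim_const y)) (eps / M)
                  ltac:(apply Rdiv_lt_0_compat; lra)).
  apply filter_imp with (2 := Hl). intros t Ht.
  assert (H1 := RInt_dens_lipschitz (exp s * y) (exp t * y)
    ltac:(apply Rmult_le_pos; [apply Rlt_le, exp_pos|lra])
    ltac:(apply Rmult_le_pos; [apply Rlt_le, exp_pos|lra])).
  apply Rle_lt_trans with (1 := H1).
  apply Rmult_lt_reg_l with (/ M); [apply Rinv_0_lt_compat; lra|].
  rewrite <- Rmult_assoc, Rinv_l, Rmult_1_l by lra.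
  replace (/ M * eps) with (eps / M) by (unfold Rdiv; ring). exact Ht.
Qed.

Lemma RInt_dens_moment_time_increment s1 s2 y : s1 <= s2 -> 0 <= y < 1 ->
  0 <= RInt (dens_moment s1) 0 y - RInt (dens_moment s2) 0 y
    <= ompow (mu - 1) y * (dens_mass s1 y - dens_mass s2 y).
Proof.
  intros hs hy.
  assert (He : exp s1 <= exp s2) by (destruct (Req_dec s1 s2) as [->|];
                                     [lra|left; apply exp_increasing; lra]).
  assert (He1 := exp_pos s1).
  set (D := fun b => dens (exp s1 * b) - dens (exp s2 * b)).
  assert (HD : forall b, 0 <= b <= y -> 0 <= D b).
  { intros b hb. assert (dens (exp s2 * b) <= dens (exp s1 * b)); [|unfold D; lra].
    apply dens_nonincreasing. split; [nra|]. apply Rmult_le_compat_r; lra. }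
  assert (e1 := ex_RInt_dens_scaled s1 0 y ltac:(lra) ltac:(lra)).
  assert (e2 := ex_RInt_dens_scaled s2 0 y ltac:(lra) ltac:(lra)).
  assert (eD : ex_RInt D 0 y) by exact (ex_RInt_minus (V := R_NormedModule) _ _ 0 y e1 e2).
  assert (HmD : RInt D 0 y = dens_mass s1 y - dens_mass s2 y)
    by exact (RInt_minus (V := R_CompleteNormedModule) _ _ 0 y e1 e2).
  assert (em1 := ex_RInt_dens_moment s1 y hy). assert (em2 := ex_RInt_dens_moment s2 y hy).
  assert (Hpt : forall x, minus (dens_moment s1 x) (dens_moment s2 x)
                          = D x * (x * ompow (mu - 1) x)).
  { intros x. unfold D, dens_moment.
    change (dens (exp s1 * x) * (x * ompow (mu - 1) x) - dens (exp s2 * x) * (x * ompow (mu - 1) x)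
            = (dens (exp s1 * x) - dens (exp s2 * x)) * (x * ompow (mu - 1) x)).
    ring. }
  assert (Hm : RInt (dens_moment s1) 0 y - RInt (dens_moment s2) 0 y
               = RInt (fun b => D b * (b * ompow (mu - 1) b)) 0 y).
  { transitivity (RInt (fun x => minus (dens_moment s1 x) (dens_moment s2 x)) 0 y);
      [symmetry; exact (RInt_minus (V := R_CompleteNormedModule) _ _ 0 y em1 em2)|].
    apply RInt_ext. intros x _. apply Hpt. }
  assert (eDm : ex_RInt (fun b => D b * (b * ompow (mu - 1) b)) 0 y).
  { eapply ex_RInt_ext; [|exact (ex_RInt_minus (V := R_NormedModule) _ _ 0 y em1 em2)].
    intros x _. apply Hpt. }
  rewrite Hm, <- HmD, <- RInt_scalR by exact eD. split.
  - apply RInt_ge_0; auto; try lra. intros x hx.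
    assert (H := ompow_pos (mu - 1) x). apply Rmult_le_pos; [apply HD; lra|nra].
  - apply RInt_le; auto; try lra; [apply ex_RInt_scalR, eD|]. intros x hx.
    assert (H1 := ompow_nondecreasing (mu - 1) x y ltac:(lra) ltac:(lra)).
    assert (H2 := ompow_pos (mu - 1) x). assert (H3 := HD x ltac:(lra)).
    rewrite Rmult_comm. apply Rmult_le_compat_r; [lra|nra].
Qed.

Lemma moment_continuous s : filterlim moment (locally s) (locally (moment s)).
Proof.
  apply filterlim_locally_Rabs. intros eps he. assert (HM := M_pos).
  (* split [moment] into a tail near 1, uniformly small, and an integral over [0,y] *)
  assert (Hev := proj1 (filterlim_locally_Rabs (F := at_left 1) _ _) (ompow_at_left_1 mu ltac:(lra))
                   (eps / 3 * mu / M)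
                   ltac:(apply Rdiv_lt_0_compat; [apply Rmult_lt_0_compat|]; lra)).
  destruct (filter_ex (F := at_left 1) _ (filter_and _ _ Hev (at_left_between 0 1 Rlt_0_1)))
    as [y [Hy1 Hy2]].
  rewrite Rminus_0_r, Rabs_pos_eq in Hy1 by (left; apply ompow_pos).
  assert (Htail : M * ompow mu y / mu < eps / 3).
  { apply Rmult_lt_reg_r with (mu / M); [apply Rdiv_lt_0_compat; lra|].
    replace (M * ompow mu y / mu * (mu / M)) with (ompow mu y) by (field; lra).
    replace (eps / 3 * (mu / M)) with (eps / 3 * mu / M) by (field; lra). exact Hy1. }
  assert (Hr := ompow_pos (mu - 1) y).
  assert (HU := proj1 (filterlim_locally_Rabs (F := locally s) _ _)
                  (dens_mass_continuous s y ltac:(lra))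
                  (eps / 3 / ompow (mu - 1) y) ltac:(apply Rdiv_lt_0_compat; lra)).
  apply filter_imp with (2 := HU). intros t Ht.
  assert (T1 := moment_tail t y ltac:(lra)). assert (T2 := moment_tail s y ltac:(lra)).
  assert (Hmid : Rabs (RInt (dens_moment t) 0 y - RInt (dens_moment s) 0 y)
                 <= ompow (mu - 1) y * Rabs (dens_mass t y - dens_mass s y)).
  { destruct (Rle_dec t s) as [hts|hts].
    - assert (H := RInt_dens_moment_time_increment t s y hts ltac:(lra)).
      rewrite !Rabs_pos_eq; [lra| |lra].
      apply Rmult_le_reg_l with (ompow (mu - 1) y); lra.
    - assert (H := RInt_dens_moment_time_increment s t y ltac:(lra) ltac:(lra)).
      rewrite Rabs_minus_sym, (Rabs_minus_sym (dens_mass t y)), !Rabs_pos_eq; [lra| |lra].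
      apply Rmult_le_reg_l with (ompow (mu - 1) y); lra. }
  assert (ompow (mu - 1) y * Rabs (dens_mass t y - dens_mass s y) < eps / 3).
  { apply Rmult_lt_reg_l with (/ ompow (mu - 1) y); [apply Rinv_0_lt_compat; lra|].
    rewrite <- Rmult_assoc, Rinv_l, Rmult_1_l by lra.
    replace (/ ompow (mu - 1) y * (eps / 3)) with (eps / 3 / ompow (mu - 1) y) by (field; lra).
    exact Ht. }
  apply Rabs_le_between in Hmid. apply Rabs_lt_between. lra.
Qed.

(** * Differentiating the normalisation constant *)

Lemma profile_time_increment_bounds s1 s2 b : s1 <= s2 -> 0 <= b < 1 ->
  - (exp s2 - exp s1) * dens_moment s1 b <= profile s2 b - profile s1 b
    <= - (exp s2 - exp s1) * dens_moment s2 b.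
Proof.
  intros hs hb. assert (He1 := exp_pos s1).
  assert (He : exp s1 <= exp s2)
    by (destruct (Req_dec s1 s2) as [->|]; [lra|left; apply exp_increasing; lra]).
  assert (Hx : 0 <= exp s1 * b <= exp s2 * b)
    by (split; [apply Rmult_le_pos|apply Rmult_le_compat_r]; lra).
  assert (HF := surv_increment_bounds _ _ Hx).
  assert (Hr := ompow_pos (mu - 1) b).
  unfold profile, dens_moment.
  replace (exp s2 * b - exp s1 * b) with ((exp s2 - exp s1) * b) in HF by ring.
  split.
  - apply Ropp_le_cancel.
    replace (- (surv (exp s2 * b) * ompow (mu - 1) b - surv (exp s1 * b) * ompow (mu - 1) b))
      with ((surv (exp s1 * b) - surv (exp s2 * b)) * ompow (mu - 1) b) by ring.
    replace (- (- (exp s2 - exp s1) * (dens (exp s1 * b) * (b * ompow (mu - 1) b))))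
      with ((exp s2 - exp s1) * b * dens (exp s1 * b) * ompow (mu - 1) b) by ring.
    apply Rmult_le_compat_r; lra.
  - apply Ropp_le_cancel.
    replace (- (surv (exp s2 * b) * ompow (mu - 1) b - surv (exp s1 * b) * ompow (mu - 1) b))
      with ((surv (exp s1 * b) - surv (exp s2 * b)) * ompow (mu - 1) b) by ring.
    replace (- (- (exp s2 - exp s1) * (dens (exp s2 * b) * (b * ompow (mu - 1) b))))
      with ((exp s2 - exp s1) * b * dens (exp s2 * b) * ompow (mu - 1) b) by ring.
    apply Rmult_le_compat_r; lra.
Qed.

Section Normalized.
Variable C : R -> R.
Hypothesis C_pos : forall t, 0 <= t -> 0 < C t.
Hypothesis W_normalized :
  forall t, 0 <= t -> is_RInt_gen (Wfun beta mu C t) (at_point 0) (at_left 1) 1.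

Lemma Wfun_eq t b : Wfun beta mu C t b = C t * profile t b.
Proof. unfold Wfun, profile, surv, ompow. ring. Qed.

Lemma is_RInt_upto_profile t : 0 <= t -> is_RInt_upto 0 1 (profile t) (/ C t).
Proof.
  intros ht.
  assert (H := is_RInt_upto_scal 0 1 Rlt_0_1 _ _ (/ C t)
                 (is_RInt_upto_of_gen _ _ _ _ (W_normalized t ht))).
  rewrite Rmult_1_r in H. eapply is_RInt_upto_ext; [exact Rlt_0_1| |exact H].
  intros x _. cbv beta. rewrite Wfun_eq. field. apply Rgt_not_eq, C_pos, ht.
Qed.

Lemma inv_C_increment_bounds s1 s2 : 0 <= s1 -> s1 <= s2 ->
  - (exp s2 - exp s1) * moment s1 <= / C s2 - / C s1 <= - (exp s2 - exp s1) * moment s2.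
Proof.
  intros h1 h12.
  assert (HQ := is_RInt_upto_lin 0 1 Rlt_0_1 _ _ _ _ 1 (-1)
                  (is_RInt_upto_profile s2 ltac:(lra)) (is_RInt_upto_profile s1 h1)).
  replace (1 * / C s2 + -1 * / C s1) with (/ C s2 - / C s1) in HQ by ring.
  split; eapply is_RInt_upto_le; try exact Rlt_0_1;
    try (apply is_RInt_upto_scal; [exact Rlt_0_1|apply is_RInt_upto_moment]); try exact HQ;
    intros b hb; assert (H := profile_time_increment_bounds s1 s2 b h12 ltac:(lra)); lra.
Qed.

Lemma inv_C_difference_quotient_close t tau : 0 <= t -> 0 <= tau -> t <> tau ->
  Rabs ((/ C t - / C tau) / (t - tau) + (exp t - exp tau) / (t - tau) * moment tau)
  <= Rabs ((exp t - exp tau) / (t - tau) * (moment tau - moment t)).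
Proof.
  intros ht htau htt.
  (* the quotient lies between [-c * moment tau] and [-c * moment t] *)
  assert (HCt := C_pos t ht). assert (HCtau := C_pos tau htau).
  remember ((/ C t - / C tau) / (t - tau)) as q eqn:Eq.
  remember ((exp t - exp tau) / (t - tau)) as c eqn:Ec.
  assert (Hq : / C t - / C tau = q * (t - tau)) by (rewrite Eq; field; lra).
  assert (Hc : exp t - exp tau = c * (t - tau)) by (rewrite Ec; field; lra).
  destruct (Rlt_dec tau t) as [hlt|hlt].
  - assert (H := inv_C_increment_bounds tau t htau ltac:(lra)).
    rewrite Hq, Hc in H.
    assert (- c * moment tau <= q <= - c * moment t).
    { split; apply Rmult_le_reg_r with (t - tau); lra. }
    rewrite !Rabs_pos_eq; lra.
  - assert (H := inv_C_increment_bounds t tau ht ltac:(lra)).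
    replace (/ C tau - / C t) with (- (q * (t - tau))) in H by lra.
    replace (exp tau - exp t) with (- (c * (t - tau))) in H by lra.
    assert (- c * moment t <= q <= - c * moment tau).
    { split; apply Rmult_le_reg_r with (tau - t); lra. }
    rewrite !Rabs_left1; lra.
Qed.

Variable tau : R.
Hypothesis tau_ge0 : 0 <= tau.

Lemma deriv_within_inv_C :
  deriv_within (fun t => 0 <= t) (fun t => / C t) tau (- exp tau * moment tau).
Proof.
  assert (Hc := deriv_within_of_derivable_pt_lim (fun t => 0 <= t) exp tau (exp tau)
                  (derivable_pt_lim_exp tau)).
  assert (HA := lim_mult _ _ _ _ Hc (filterlim_const (moment tau))).
  assert (HB := lim_mult _ _ _ _ Hc (lim_minus _ _ _ _ (filterlim_const (moment tau))
                  (within_of_locally _ _ _ _ (moment_continuous tau)))).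
  rewrite Rminus_eq_0, Rmult_0_r in HB.
  apply filterlim_locally_Rabs. intros eps he.
  assert (H1 := proj1 (filterlim_locally_Rabs _ _) HA (eps / 2) ltac:(lra)).
  assert (H2 := proj1 (filterlim_locally_Rabs _ _) HB (eps / 2) ltac:(lra)).
  assert (H3 : within (fun t => 0 <= t /\ t <> tau) (locally tau) (fun t => 0 <= t /\ t <> tau))
    by (apply within_forall; auto).
  apply filter_imp with (2 := filter_and _ _ H1 (filter_and _ _ H2 H3)).
  intros t [h1 [h2 [h3 h4]]]. cbv beta in *. rewrite Rminus_0_r in h2.
  assert (H := inv_C_difference_quotient_close t tau h3 tau_ge0 h4).
  apply Rabs_lt_between in h1. apply Rabs_lt_between. apply Rabs_le_between in H. lra.
Qed.

Lemma deriv_within_C :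
  deriv_within (fun t => 0 <= t) C tau (C tau * C tau * (exp tau * moment tau)).
Proof.
  assert (Hinv : forall t, 0 <= t -> / C t <> 0)
    by (intros t ht; apply Rinv_neq_0_compat, Rgt_not_eq, C_pos, ht).
  assert (H := deriv_within_inv _ _ _ _ Hinv tau_ge0 deriv_within_inv_C).
  replace (C tau * C tau * (exp tau * moment tau))
    with (- (- exp tau * moment tau) / (/ C tau * / C tau))
    by (assert (C tau <> 0) by (apply Rgt_not_eq, C_pos, tau_ge0); field; auto).
  eapply deriv_within_ext; [|exact tau_ge0|exact H].
  intros t ht. apply Rinv_inv.
Qed.

(** * The boundary condition and the transport equation *)

Let dC : R := C tau * C tau * (exp tau * moment tau).

Lemma Wfun_at_0 : Wfun beta mu C tau 0 = C tau.
Proof. rewrite Wfun_eq. unfold profile. rewrite Rmult_0_r, surv_0, ompow_0. ring. Qed.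

Lemma boundary_condition :
  is_RInt_gen (fun b => exp tau * beta (exp tau * b) * Wfun beta mu C tau b)
    (at_point 0) (at_left 1) (Wfun beta mu C tau 0 * (1 + (dC / (C tau ^ 2) - mu / C tau))).
Proof.
  apply (is_RInt_gen_of_upto 0 1 Rlt_0_1).
  (* split [(1-b)^(mu-1) = (1-b)^mu + b (1-b)^(mu-1)] *)
  assert (H := is_RInt_upto_lin 0 1 Rlt_0_1 _ _ _ _ (C tau) (C tau * exp tau)
                 (is_RInt_upto_dens_flux tau _ (is_RInt_upto_profile tau tau_ge0))
                 (is_RInt_upto_moment tau)).
  assert (hC := C_pos tau tau_ge0).
  replace (Wfun beta mu C tau 0 * (1 + (dC / (C tau ^ 2) - mu / C tau)))
    with (C tau * (1 - mu * / C tau) + C tau * exp tau * moment tau)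
    by (rewrite Wfun_at_0; unfold dC; field; lra).
  eapply is_RInt_upto_ext; [exact Rlt_0_1| |exact H]. intros b hb. cbv beta.
  rewrite Wfun_eq. unfold dens_flux, dens_moment, profile, dens.
  rewrite (ompow_split mu b) by lra. ring.
Qed.

Lemma is_derive_surv_comp (g : R -> R) x dg : is_derive g x dg -> 0 < g x ->
  continuity_pt beta (g x) -> is_derive (fun z => surv (g z)) x (- dg * dens (g x)).
Proof.
  intros Hg hx hc.
  assert (HB := is_derive_comp _ _ x _ _ (is_derive_Bfun (g x) hx hc) Hg).
  assert (H := is_derive_comp _ _ x _ _ (is_derive_exp (- Bfun beta (g x)))
                 (is_derive_opp _ _ _ HB)).
  replace (- dg * dens (g x)) with (scal (opp (scal dg (beta (g x)))) (exp (- Bfun beta (g x))));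
    [exact H|].
  change (- (dg * beta (g x)) * exp (- Bfun beta (g x)) = - dg * dens (g x)).
  unfold dens, surv. ring.
Qed.

Lemma transport_equation b : 0 < b < 1 -> continuity_pt beta (exp tau * b) ->
  exists dWt dWb : R,
    deriv_within (fun t => 0 <= t) (fun t => Wfun beta mu C t b) tau dWt /\
    is_derive (fun x => (1 - x) * Wfun beta mu C tau x) b dWb /\
    dWt + dWb + exp tau * beta (exp tau * b) * Wfun beta mu C tau b
      = Wfun beta mu C tau b * C tau * (dC / (C tau ^ 2) - mu / C tau).
Proof.
  intros hb hc.
  assert (hY : 0 < exp tau * b) by (apply Rmult_lt_0_compat; [apply exp_pos|lra]).
  assert (Ht : is_derive (fun t => exp t * b) tau (exp tau * b)) by (auto_derive; auto; ring).
  assert (Hx : is_derive (fun z => exp tau * z) b (exp tau)) by (auto_derive; auto; ring).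
  assert (Hdt := deriv_within_mult _ _ _ _ _ _
    (deriv_within_mult _ _ _ _ _ _ deriv_within_C (is_derive_surv_comp _ tau _ Ht hY hc))
    (is_derive_const (ompow (mu - 1) b) tau)).
  assert (Hdb := is_derive_scal _ b (C tau) _
    (is_derive_mult _ _ b _ _ (is_derive_surv_comp _ b _ Hx hY hc) (is_derive_ompow mu b ltac:(lra))
                    Rmult_comm)).
  eexists. eexists. split; [|split].
  - eapply deriv_within_ext; [|exact tau_ge0|exact Hdt].
    intros t _. cbv beta. rewrite Wfun_eq. unfold profile. ring.
  - eapply is_derive_ext_loc; [|exact Hdb].
    apply (locally_interval _ b m_infty 1); [exact I|simpl; lra|].
    intros x _ hx. simpl in hx. cbv beta. rewrite Wfun_eq. unfold profile.
    rewrite (ompow_split mu x) by lra. unfold mult; simpl. ring.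
  - rewrite Wfun_eq. unfold profile, dens, dC. change (scal (C tau) ?u) with (C tau * u).
    rewrite (ompow_split mu b) by lra.
    assert (C tau <> 0) by (apply Rgt_not_eq, C_pos, tau_ge0).
    unfold plus, mult, zero; simpl. field. auto.
Qed.

End Normalized.

End Model.

Theorem proposition2 (mu : R) (beta : R -> R) (C : R -> R) :
  0 < mu < 1 ->
  (forall a, 0 <= a -> 0 < beta a) ->
  (exists M, forall a, 0 <= a -> beta a <= M) ->
  (forall a1 a2, 0 <= a1 -> a1 <= a2 -> beta a2 <= beta a1) ->
  is_lim (fun a => a * beta a) p_infty mu ->
  (forall tau, 0 <= tau -> 0 < C tau) ->
  (forall tau, 0 <= tau ->
     is_RInt_gen (Wfun beta mu C tau) (at_point 0) (at_left 1) 1) ->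
  forall tau, 0 <= tau ->
    exists dC : R,
      deriv_within (fun t => 0 <= t) C tau dC /\
      let delta := dC / (C tau ^ 2) - mu / C tau in
      (* boundary condition *)
      is_RInt_gen (fun b => exp tau * beta (exp tau * b) * Wfun beta mu C tau b)
        (at_point 0) (at_left 1) (Wfun beta mu C tau 0 * (1 + delta)) /\
      (* transport equation, at every b in (0,1) where beta is continuous
         at e^tau b *)
      (forall b, 0 < b < 1 -> continuity_pt beta (exp tau * b) ->
         exists dWt dWb : R,
           deriv_within (fun t => 0 <= t) (fun t => Wfun beta mu C t b) tau dWt /\
           is_derive (fun x => (1 - x) * Wfun beta mu C tau x) b dWb /\
           dWt + dWb + exp tau * beta (exp tau * b) * Wfun beta mu C tau b
             = Wfun beta mu C tau b * C tau * delta).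
Proof.
  intros mu_range beta_pos [M beta_le] beta_nonincreasing _ C_pos W_normalized tau tau_ge0.
  exists (C tau * C tau * (exp tau * moment beta mu tau)). split; [|split].
  - eapply deriv_within_C; eassumption.
  - eapply boundary_condition; eassumption.
  - eapply transport_equation; eassumption.
Qed.
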